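(* Let $C_0,\beta_h,\gamma_h,\beta_v,\gamma_v>0$ be constants and consider the ODE \[\frac{di_h}{dt}=\frac{C_0\beta_h\beta_v\, i_h(1-i_h)}{\beta_v i_h+\gamma_v}-\gamma_h i_h ,\qquad i_h(0)\in[0,1].\] Let $\mathcal{R}_0=\sqrt{\frac{\beta_h}{\gamma_v}\cdot\frac{C_0\beta_v}{\gamma_h}}$. The ODE has two equilibrium points \[E^f=0\quad\text{and}\quad E^e=\frac{C_0\beta_h\beta_v-\gamma_h\gamma_v}{C_0\beta_h\beta_v+\beta_v\gamma_h},\] and (i) $E^f$ is globally asymptotically stable when $\mathcal{R}_0\le 1$, globally exponentially stable when $\mathcal{R}_0<1$, and unstable when $\mathcal{R}_0>1$; (ii) when $\mathcal{R}_0>1$, $E^e$ is locally asymptotically stable, and it is globally asymptotically stable when $i_h(0)\in(0,1]$.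
   Context: For an ODE $y'=f(y)$ with equilibrium $y_0$ ($f(y_0)=0$): $y_0$ is stable if for every $\epsilon>0$ there is $\delta>0$ such that $|y(0)-y_0|<\delta$ implies $|y(t)-y_0|<\epsilon$ for all $t>0$; locally asymptotically stable if there is $a>0$ such that $|y(0)-y_0|\le a$ implies $y(t)\to y_0$; globally asymptotically stable if $y(t)\to y_0$ as $t\to\infty$ (for all considered initial values); globally exponentially stable if it is globally asymptotically stable and there are $M,\kappa>0$ with $|y(t)-y_0|\le Me^{-\kappa t}$; unstable if not stable. *)

From Stdlib Require Import Reals.
Open Scope R_scope.

Definition F (C0 bh gh bv gv : R) (y : R) : R :=
  C0 * bh * bv * y * (1 - y) / (bv * y + gv) - gh * y.

Definition Rnum0 (C0 bh gh bv gv : R) : R :=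
  sqrt ((bh / gv) * (C0 * bv / gh)).

Definition Ee (C0 bh gh bv gv : R) : R :=
  (C0 * bh * bv - gh * gv) / (C0 * bh * bv + bv * gh).

Definition is_sol (f : R -> R) (y : R -> R) : Prop :=
  (forall eps, 0 < eps -> exists delta, 0 < delta /\
     forall t, 0 <= t < delta -> Rabs (y t - y 0) < eps) /\
  (forall t, 0 < t -> derivable_pt_lim y t (f (y t))).

Definition conv_to (y : R -> R) (y0 : R) : Prop :=
  forall eps, 0 < eps -> exists T, forall t, T <= t -> Rabs (y t - y0) < eps.

Definition stable (f : R -> R) (S : R -> Prop) (y0 : R) : Prop :=
  forall eps, 0 < eps -> exists delta, 0 < delta /\
    forall y, is_sol f y -> S (y 0) -> Rabs (y 0 - y0) < delta ->
      forall t, 0 < t -> Rabs (y t - y0) < eps.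

Definition unstable (f : R -> R) (S : R -> Prop) (y0 : R) : Prop :=
  ~ stable f S y0.

Definition loc_asym_stable (f : R -> R) (S : R -> Prop) (y0 : R) : Prop :=
  exists a, 0 < a /\
    forall y, is_sol f y -> S (y 0) -> Rabs (y 0 - y0) <= a -> conv_to y y0.

Definition glob_asym_stable (f : R -> R) (S : R -> Prop) (y0 : R) : Prop :=
  forall y, is_sol f y -> S (y 0) -> conv_to y y0.

Definition glob_exp_stable (f : R -> R) (S : R -> Prop) (y0 : R) : Prop :=
  glob_asym_stable f S y0 /\
  exists M kappa, 0 < M /\ 0 < kappa /\
    forall y, is_sol f y -> S (y 0) ->
      forall t, 0 <= t -> Rabs (y t - y0) <= M * exp (- kappa * t).

Definition closed01 (x : R) : Prop := 0 <= x <= 1.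
Definition half_open01 (x : R) : Prop := 0 < x <= 1.

(* Writing the right-hand side as [f z = z (A - B z) / (bv z + gv)], where
   [A = C0 bh bv - gh gv] has the sign of [R0 - 1] and [B = C0 bh bv + gh bv > A],
   every claim becomes a comparison argument for a scalar autonomous equation: a
   quantity [V (y t) e^(k t) + m t] whose time derivative is nonpositive cannot increase.
   Such arguments make [[0, 1]] invariant.  If [A <= 0] then [f z <= - c z^2] on [[0, 1]],
   so [1 / y] grows at least linearly, and if [A < 0] then [f z <= - k z] gives
   exponential decay.  If [A > 0], a solution started in [(0, 1]] stays above
   [min (y 0) (A / B)], which makes [(y - A / B)^2] decay exponentially; and the
   solution obtained by separation of variables from any small positive value climbs
   to [A / 2B], so [0] is unstable. *)

From Stdlib Require Import Reals Ranalysis5 Lra Psatz ClassicalEpsilon.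
From Coquelicot Require Import Rcomplements.
Open Scope R_scope.

(** * Calculus on the real line *)

Lemma derivable_pt_lim_eq_deriv f x l l' :
  derivable_pt_lim f x l -> l = l' -> derivable_pt_lim f x l'.
Proof. now intros h <-. Qed.

Lemma derivable_pt_lim_continuity_pt f x l :
  derivable_pt_lim f x l -> continuity_pt f x.
Proof. intro h. apply derivable_continuous_pt. now exists l. Qed.

Lemma continuity_pt_ball g t eps : continuity_pt g t -> 0 < eps ->
  exists d, 0 < d /\ forall u, Rabs (u - t) < d -> Rabs (g u - g t) < eps.
Proof.
  intros hc he. destruct (hc eps he) as [d [hd hball]].
  exists d; split; [exact hd|]. intros u hu.
  destruct (Req_dec u t) as [->|hne].
  - rewrite Rminus_diag, Rabs_R0; exact he.
  - apply hball. split; [split; [exact I | auto] | exact hu].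
Qed.

Lemma nonincreasing_of_derive_nonpos (G G' : R -> R) a b :
  a <= b ->
  (forall t, a <= t <= b -> continuity_pt G t) ->
  (forall t, a < t < b -> derivable_pt_lim G t (G' t)) ->
  (forall t, a < t < b -> G' t <= 0) ->
  G b <= G a.
Proof.
  intros hab hc hd hneg. destruct (Req_dec a b) as [<- | hne]; [lra|].
  assert (pr : forall t, a < t < b -> derivable_pt G t)
    by (intros t ht; exists (G' t); exact (hd t ht)).
  destruct (MVT G id a b pr (fun t _ => derivable_pt_id t) ltac:(lra) hc
              (fun t _ => derivable_continuous_pt _ _ (derivable_pt_id t))) as [c [hcab e]].
  rewrite (derive_pt_eq_0 _ _ _ (pr c hcab) (hd c hcab)), derive_pt_id in e.
  unfold id in e. pose proof (hneg c hcab). nra.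
Qed.

Lemma strictly_increasing_of_derive_pos (T T' : R -> R) lo hi :
  (forall z, lo < z < hi -> derivable_pt_lim T z (T' z) /\ 0 < T' z) ->
  forall z1 z2, lo < z1 -> z1 < z2 -> z2 < hi -> T z1 < T z2.
Proof.
  intros hT z1 z2 h1 h12 h2.
  destruct (MVT_cor2 T T' z1 z2 h12) as [c [e hc]].
  - intros c hc. apply hT. lra.
  - assert (0 < T' c) by (apply hT; lra). nra.
Qed.

Lemma last_crossing_up g a b c :
  a <= b -> (forall t, a <= t <= b -> continuity_pt g t) -> g a <= c < g b ->
  exists s, a <= s < b /\ g s = c /\ forall u, s < u <= b -> c < g u.
Proof.
  intros hab hc [ha hb].
  set (E := fun u => a <= u <= b /\ g u <= c).
  destruct (completeness E) as [s [hub hlub]].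
  { exists b. intros u [hu _]. lra. }
  { exists a. split; [lra | exact ha]. }
  assert (has : a <= s) by (apply hub; split; [lra | exact ha]).
  assert (hsb : s <= b) by (apply hlub; intros u [hu _]; lra).
  assert (hright : forall u, s < u <= b -> c < g u).
  { intros u hu. apply Rnot_le_lt. intro hgu.
    assert (u <= s) by (apply hub; split; [lra | exact hgu]). lra. }
  assert (hgs : g s <= c).
  { apply Rnot_lt_le. intro hlt.
    destruct (continuity_pt_ball g s (g s - c) (hc s ltac:(lra)) ltac:(lra)) as [d [hd hball]].
    enough (s <= s - d / 2) by lra.
    apply hlub. intros u [hu hgu]. apply Rnot_lt_le. intro hu'.
    assert (u <= s) by (apply hub; split; [exact hu | exact hgu]).
    specialize (hball u ltac:(rewrite Rabs_left1; lra)). apply Rabs_def2 in hball. lra. }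
  assert (hsb' : s < b) by (destruct hsb as [h | ->]; [exact h | lra]).
  exists s. split; [lra|]. split; [|exact hright].
  apply Rle_antisym; [exact hgs|]. apply Rnot_lt_le. intro hlt.
  destruct (continuity_pt_ball g s (c - g s) (hc s ltac:(lra)) ltac:(lra)) as [d [hd hball]].
  pose proof (Rmin_l (d / 2) (b - s)). pose proof (Rmin_r (d / 2) (b - s)).
  assert (0 < Rmin (d / 2) (b - s)) by (apply Rmin_glb_lt; lra).
  set (u := s + Rmin (d / 2) (b - s)).
  specialize (hright u ltac:(unfold u; lra)).
  specialize (hball u ltac:(unfold u; rewrite Rabs_right; lra)).
  apply Rabs_def2 in hball. lra.
Qed.

(** * Comparison principles for scalar autonomous equations *)

Lemma is_sol_opp f y : is_sol f y -> is_sol (fun z => - f (- z)) (fun t => - y t).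
Proof.
  intros [h0 hd]. split.
  - intros eps he. destruct (h0 eps he) as [d [hd0 hball]].
    exists d. split; [exact hd0|]. intros t ht.
    replace (- y t - - y 0) with (- (y t - y 0)) by ring. rewrite Rabs_Ropp. auto.
  - intros t ht. rewrite Ropp_involutive. exact (derivable_pt_lim_opp y t _ (hd t ht)).
Qed.

(* [is_sol] only sees [y] on [0, +oo), and at [0] only from the right; freezing
   [y] on (-oo, 0] yields a function to which the two-sided calculus applies. *)
Lemma sol_ext_derivable f y t : is_sol f y -> 0 < t ->
  derivable_pt_lim (fun u => y (Rmax u 0)) t (f (y t)).
Proof.
  intros hs ht eps he. destruct (proj2 hs t ht eps he) as [d hd].
  assert (hp : 0 < Rmin d t) by (apply Rmin_glb_lt; [apply cond_pos | lra]).
  exists (mkposreal _ hp). intros h hh0 hh. simpl in hh.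
  pose proof (Rmin_l d t). pose proof (Rmin_r d t). apply Rabs_def2 in hh as hh'.
  rewrite (Rmax_left (t + h) 0), (Rmax_left t 0) by lra.
  apply hd; [exact hh0 | lra].
Qed.

Lemma sol_ext_continuity f y t : is_sol f y -> 0 <= t ->
  continuity_pt (fun u => y (Rmax u 0)) t.
Proof.
  intros hs [ht | <-].
  - exact (derivable_pt_lim_continuity_pt _ _ _ (sol_ext_derivable f y t hs ht)).
  - intros eps he. destruct (proj1 hs eps he) as [d [hd hball]].
    exists d. split; [lra|]. intros u [_ hu]. simpl in *. unfold R_dist in *.
    rewrite (Rmax_left 0 0) by lra. rewrite Rminus_0_r in hu.
    destruct (Rle_lt_dec u 0) as [hu0 | hu0].
    + rewrite Rmax_right by lra. rewrite Rminus_diag, Rabs_R0. exact he.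
    + rewrite Rmax_left by lra. apply hball. rewrite Rabs_right in hu; lra.
Qed.

Lemma sol_last_crossing_up f y c t1 : is_sol f y -> 0 <= t1 -> y 0 <= c < y t1 ->
  exists s, 0 <= s < t1 /\ y s = c /\ forall u, s < u <= t1 -> c < y u.
Proof.
  intros hs ht1 hy.
  assert (ext : forall u, 0 <= u -> y (Rmax u 0) = y u) by (intros; now rewrite Rmax_left).
  destruct (last_crossing_up (fun u => y (Rmax u 0)) 0 t1 c ht1) as [s [hs1 [hs2 hs3]]].
  - intros t ht. apply (sol_ext_continuity f); [exact hs | lra].
  - rewrite !ext by lra. exact hy.
  - exists s. rewrite ext in hs2 by lra. split; [exact hs1|]. split; [exact hs2|].
    intros u hu. rewrite <- ext by lra. exact (hs3 u hu).
Qed.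

Lemma sol_last_crossing_down f y c t1 : is_sol f y -> 0 <= t1 -> y t1 < c <= y 0 ->
  exists s, 0 <= s < t1 /\ y s = c /\ forall u, s < u <= t1 -> y u < c.
Proof.
  intros hs ht1 hy.
  destruct (sol_last_crossing_up _ _ (- c) t1 (is_sol_opp f y hs) ht1 ltac:(lra))
    as [s [hs1 [hs2 hs3]]].
  exists s. split; [exact hs1|]. split; [lra|]. intros u hu. specialize (hs3 u hu). lra.
Qed.

Lemma sol_lyapunov_nonincreasing f y phi phi' k m a b :
  is_sol f y -> 0 <= a <= b ->
  (forall t, a <= t <= b -> derivable_pt_lim phi (y t) (phi' (y t))) ->
  (forall t, a < t < b ->
     (phi' (y t) * f (y t) + k * phi (y t)) * exp (k * t) + m <= 0) ->
  phi (y b) * exp (k * b) + m * b <= phi (y a) * exp (k * a) + m * a.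
Proof.
  intros hs hab hphi hdec.
  set (ye := fun u => y (Rmax u 0)).
  assert (hye : forall t, 0 <= t -> ye t = y t) by (intros; unfold ye; now rewrite Rmax_left).
  set (G := (comp phi ye * comp exp (mult_real_fct k id) + mult_real_fct m id)%F).
  assert (hG : forall t, 0 <= t -> G t = phi (y t) * exp (k * t) + m * t).
  { intros t ht. unfold G, plus_fct, mult_fct, comp, mult_real_fct, id. now rewrite hye. }
  assert (hlin : forall c t, derivable_pt_lim (mult_real_fct c id) t c).
  { intros c t. apply (derivable_pt_lim_eq_deriv _ _ (c * 1)); [|ring].
    apply derivable_pt_lim_scal, derivable_pt_lim_id. }
  rewrite <- !hG by lra.
  apply (nonincreasing_of_derive_nonpos G
           (fun t => (phi' (y t) * f (y t) + k * phi (y t)) * exp (k * t) + m));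
    [lra | | | exact hdec].
  - intros t ht. unfold G.
    apply continuity_pt_plus; [apply continuity_pt_mult; apply continuity_pt_comp|].
    + apply (sol_ext_continuity f); [exact hs | lra].
    + rewrite hye by lra. exact (derivable_pt_lim_continuity_pt _ _ _ (hphi t ht)).
    + exact (derivable_pt_lim_continuity_pt _ _ _ (hlin k t)).
    + exact (derivable_pt_lim_continuity_pt _ _ _ (derivable_pt_lim_exp _)).
    + exact (derivable_pt_lim_continuity_pt _ _ _ (hlin m t)).
  - intros t ht. unfold G.
    eapply derivable_pt_lim_eq_deriv.
    + apply derivable_pt_lim_plus; [apply derivable_pt_lim_mult; apply derivable_pt_lim_comp|].
      * apply (sol_ext_derivable f); [exact hs | lra].
      * rewrite hye by lra. apply hphi. lra.
      * apply hlin.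
      * apply derivable_pt_lim_exp.
      * apply hlin.
    + unfold comp, mult_real_fct, id. rewrite hye by lra. ring.
Qed.

Lemma sol_exp_weighted_le f y k a b : is_sol f y -> 0 <= a <= b ->
  (forall t, a < t < b -> f (y t) + k * y t <= 0) ->
  y b * exp (k * b) <= y a * exp (k * a).
Proof.
  intros hs hab hneg.
  pose proof (sol_lyapunov_nonincreasing f y id (fun _ => 1) k 0 a b hs hab) as H.
  unfold id in H. rewrite !Rmult_0_l, !Rplus_0_r in H. apply H.
  - intros. apply derivable_pt_lim_id.
  - intros t ht. pose proof (exp_pos (k * t)). specialize (hneg t ht). nra.
Qed.

Lemma sol_exp_weighted_ge f y k a b : is_sol f y -> 0 <= a <= b ->
  (forall t, a < t < b -> 0 <= f (y t) + k * y t) ->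
  y a * exp (k * a) <= y b * exp (k * b).
Proof.
  intros hs hab hpos.
  enough (- y b * exp (k * b) <= - y a * exp (k * a)) by lra.
  apply (sol_exp_weighted_le _ _ k a b (is_sol_opp f y hs) hab).
  intros t ht. rewrite Ropp_involutive. specialize (hpos t ht). lra.
Qed.

Lemma sol_le_of_rhs_nonpos f y c : is_sol f y -> y 0 <= c ->
  (forall t, 0 < t -> c < y t -> f (y t) <= 0) -> forall t, 0 <= t -> y t <= c.
Proof.
  intros hs h0 hneg t1 ht1. apply Rnot_lt_le. intro hlt.
  destruct (sol_last_crossing_up f y c t1 hs ht1 (conj h0 hlt)) as [s [hs1 [hys hgt]]].
  assert (H : y t1 * exp (0 * t1) <= y s * exp (0 * s)).
  { apply (sol_exp_weighted_le f); [exact hs | lra |].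
    intros t ht. rewrite Rmult_0_l, Rplus_0_r. apply hneg; [lra | apply hgt; lra]. }
  rewrite !Rmult_0_l, exp_0, !Rmult_1_r in H. lra.
Qed.

Lemma sol_ge_of_rhs_nonneg f y c : is_sol f y -> c <= y 0 ->
  (forall t, 0 < t -> y t < c -> 0 <= f (y t)) -> forall t, 0 <= t -> c <= y t.
Proof.
  intros hs h0 hpos t ht.
  enough (- y t <= - c) by lra.
  apply (sol_le_of_rhs_nonpos _ _ (- c) (is_sol_opp f y hs)); [lra | | exact ht].
  intros u hu hlt. rewrite Ropp_involutive. specialize (hpos u hu). lra.
Qed.

(* A one-sided Lipschitz bound at [0] makes [y e^(-L t)] nondecreasing while [y] is
   slightly negative, so [y] cannot leave [[0, +oo)] after its last zero. *)
Lemma sol_nonneg f y d L : is_sol f y -> 0 < d ->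
  (forall z, - d < z < 0 -> L * z <= f z) -> 0 <= y 0 -> forall t, 0 <= t -> 0 <= y t.
Proof.
  intros hs hd hlin h0 t1 ht1. apply Rnot_lt_le. intro hlt.
  destruct (sol_last_crossing_down f y 0 t1 hs ht1 (conj hlt h0)) as [s [hs1 [hys hneg]]].
  destruct (continuity_pt_ball _ s d (sol_ext_continuity f y s hs ltac:(lra)) hd)
    as [e [he hball]].
  set (t2 := Rmin t1 (s + e / 2)).
  assert (ht2 : s < t2 <= t1 /\ t2 <= s + e / 2).
  { unfold t2. split; [split; [apply Rmin_glb_lt | apply Rmin_l] | apply Rmin_r]; lra. }
  assert (hnear : forall t, s < t <= t2 -> - d < y t < 0).
  { intros t ht. split; [| apply hneg; lra].
    specialize (hball t ltac:(rewrite Rabs_right; lra)).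
    rewrite !Rmax_left, hys in hball by lra. apply Rabs_def2 in hball. lra. }
  assert (H : y s * exp (- L * s) <= y t2 * exp (- L * t2)).
  { apply (sol_exp_weighted_ge f); [exact hs | lra |].
    intros t ht. specialize (hlin (y t) (hnear t ltac:(lra))). lra. }
  rewrite hys, Rmult_0_l in H. pose proof (exp_pos (- L * t2)).
  destruct (hnear t2 ltac:(lra)). nra.
Qed.

Lemma sol_inv_time_decay f y c : is_sol f y -> (forall t, 0 <= t -> 0 < y t) ->
  (forall t, 0 < t -> f (y t) <= - c * (y t * y t)) -> forall t, 0 <= t -> c * t * y t < 1.
Proof.
  intros hs hpos hrhs t ht.
  assert (H : - (1 / y t) * exp (0 * t) + c * t <= - (1 / y 0) * exp (0 * 0) + c * 0).
  { apply (sol_lyapunov_nonincreasing f y (fun z => - (1 / z)) (fun z => / (z * z)));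
      [exact hs | lra | |].
    - intros u hu. pose proof (hpos u ltac:(lra)).
      apply (derivable_pt_lim_eq_deriv _ _
               (- ((0 * id (y u) - 1 * fct_cte 1 (y u)) / (id (y u))²))).
      + apply (derivable_pt_lim_opp (fct_cte 1 / id)%F), derivable_pt_lim_div;
          [apply derivable_pt_lim_const | apply derivable_pt_lim_id | unfold id; lra].
      + unfold fct_cte, id, Rsqr. field. lra.
    - intros u hu. pose proof (hpos u ltac:(lra)).
      rewrite !Rmult_0_l, exp_0, Rplus_0_r, Rmult_1_r.
      assert (hle : / (y u * y u) * f (y u) <= / (y u * y u) * (- c * (y u * y u))).
      { apply Rmult_le_compat_l; [apply Rlt_le, Rinv_0_lt_compat; nra | apply hrhs; lra]. }
      replace (/ (y u * y u) * (- c * (y u * y u))) with (- c) in hle by (field; lra). lra. }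
  rewrite !Rmult_0_l, exp_0, !Rmult_1_r, Rmult_0_r, Rplus_0_r in H.
  pose proof (hpos t ht). pose proof (hpos 0 (Rle_refl 0)).
  assert (0 < 1 / y 0) by (apply Rdiv_lt_0_compat; lra).
  assert (c * t < 1 / y t) by lra.
  apply (Rlt_div_r _ _ (y t)); lra.
Qed.

Lemma conv_to_of_abs_le_exp y c k : 0 < k ->
  (forall t, 0 <= t -> Rabs (y t - c) <= exp (- k * t)) -> conv_to y c.
Proof.
  intros hk hbound eps he.
  exists (Rmax 0 (1 - ln eps / k)). intros t ht.
  pose proof (Rmax_l 0 (1 - ln eps / k)). pose proof (Rmax_r 0 (1 - ln eps / k)).
  apply (Rle_lt_trans _ _ _ (hbound t ltac:(lra))).
  rewrite <- (exp_ln eps he). apply exp_increasing.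
  assert (hkt : k * (1 - ln eps / k) <= k * t) by (apply Rmult_le_compat_l; lra).
  replace (k * (1 - ln eps / k)) with (k - ln eps) in hkt by (field; lra). lra.
Qed.

(** * Solutions by separation of variables *)

Lemma increasing_surjective_inverse (T : R -> R) lo hi :
  (forall z1 z2, lo < z1 -> z1 < z2 -> z2 < hi -> T z1 < T z2) ->
  (forall x, exists z, lo < z < hi /\ T z = x) ->
  exists g, (forall x, lo < g x < hi /\ T (g x) = x) /\
            (forall z, lo < z < hi -> g (T z) = z) /\
            (forall u v, u < v -> g u < g v).
Proof.
  intros hTinc hsurj. destruct (choice _ hsurj) as [g hg].
  exists g. split; [exact hg|]. split.
  - intros z hz. destruct (hg (T z)) as [hgz e].
    destruct (Rtotal_order (g (T z)) z) as [h | [h | h]]; [| exact h |].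
    + specialize (hTinc _ _ (proj1 hgz) h (proj2 hz)). lra.
    + specialize (hTinc _ _ (proj1 hz) h (proj2 hgz)). lra.
  - intros u v huv. destruct (hg u) as [hgu eu]. destruct (hg v) as [hgv ev].
    destruct (Rtotal_order (g u) (g v)) as [h | [h | h]]; [exact h | |].
    + rewrite h in eu. lra.
    + specialize (hTinc _ _ (proj1 hgv) h (proj2 hgu)). lra.
Qed.

Lemma inverse_derivable (T T' g : R -> R) lo hi x :
  (forall z, lo < z < hi -> derivable_pt_lim T z (T' z) /\ 0 < T' z) ->
  (forall x, lo < g x < hi /\ T (g x) = x) -> (forall u v, u < v -> g u < g v) ->
  derivable_pt_lim g x (/ T' (g x)).
Proof.
  intros hT hg hglt.
  pose proof (strictly_increasing_of_derive_pos T T' lo hi hT) as hTinc.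
  assert (hgle : forall u v, u <= v -> g u <= g v)
    by (intros u v [h | ->]; [left; exact (hglt u v h) | right; reflexivity]).
  set (lb := x - 1). set (ub := x + 1).
  assert (hrange : forall a, g lb <= a <= g ub -> lo < a < hi).
  { intros a ha. destruct (hg lb) as [[h1 _] _]. destruct (hg ub) as [[_ h2] _]. lra. }
  assert (Prf : forall a, g lb <= a <= g ub -> derivable_pt T a).
  { intros a ha. exists (T' a). exact (proj1 (hT a (hrange a ha))). }
  assert (hgx : g lb <= g x <= g ub) by (split; apply hgle; unfold lb, ub; lra).
  assert (hcont : continuity_pt g x).
  { apply (continuity_pt_recip_interv T g (g lb) (g ub)).
    - apply hglt. unfold lb, ub. lra.
    - intros u v hu huv hv. apply hTinc; [apply hrange; split | | apply hrange; split]; lra.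
    - intros u _ _. apply hg.
    - intros u hu1 hu2. rewrite (proj2 (hg lb)) in hu1. rewrite (proj2 (hg ub)) in hu2.
      split; apply hgle; lra.
    - intros a ha. exact (derivable_pt_lim_continuity_pt _ _ _ (proj1 (hT a (hrange a ha)))).
    - rewrite (proj2 (hg lb)), (proj2 (hg ub)). unfold lb, ub. lra. }
  pose proof (derivable_pt_lim_recip_interv T g lb ub x Prf hcont
                ltac:(unfold lb, ub; lra) ltac:(unfold lb, ub; lra) hgx) as D.
  destruct (hT _ (hrange _ hgx)) as [hTd hTpos].
  rewrite (derive_pt_eq_0 T (g x) (T' (g x)) (Prf (g x) hgx) hTd) in D.
  apply (derivable_pt_lim_eq_deriv _ _ (1 / T' (g x))); [| field; lra].
  apply D.
  - intros u _. apply hg.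
  - lra.
Qed.

(* Separation of variables: shifting the inverse of a primitive of [1 / f] in
   time gives the solution through [z0]. *)
Lemma sol_of_time_map f T lo hi z0 :
  (forall z, lo < z < hi -> 0 < f z /\ derivable_pt_lim T z (/ f z)) ->
  (forall x, exists z, lo < z < hi /\ T z = x) ->
  lo < z0 < hi ->
  exists y, is_sol f y /\ forall z, lo < z < hi -> y (T z - T z0) = z.
Proof.
  intros hT hsurj hz0.
  assert (hT' : forall z, lo < z < hi -> derivable_pt_lim T z (/ f z) /\ 0 < / f z).
  { intros z hz. destruct (hT z hz). split; [assumption | now apply Rinv_0_lt_compat]. }
  destruct (increasing_surjective_inverse T lo hi
              (strictly_increasing_of_derive_pos T _ lo hi hT') hsurj) as [g [hg [hgT hglt]]].
  assert (hgd : forall x, derivable_pt_lim g x (f (g x))).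
  { intro x. rewrite <- (Rinv_inv (f (g x))).
    exact (inverse_derivable T _ g lo hi x hT' hg hglt). }
  exists (fun t => g (T z0 + t)). split.
  - split.
    + intros eps he.
      destruct (continuity_pt_ball g (T z0) eps
                  (derivable_pt_lim_continuity_pt _ _ _ (hgd (T z0))) he) as [d [hd hball]].
      exists d. split; [exact hd|]. intros t ht. rewrite Rplus_0_r.
      apply hball. replace (T z0 + t - T z0) with t by ring. rewrite Rabs_right; lra.
    + intros t _.
      apply (derivable_pt_lim_eq_deriv _ _ (f (g (T z0 + t)) * 1)); [| ring].
      apply (derivable_pt_lim_comp (fun t => T z0 + t) g); [| apply hgd].
      apply (derivable_pt_lim_eq_deriv _ _ (0 + 1)); [| ring].
      apply (derivable_pt_lim_plus (fct_cte (T z0)) id);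
        [apply derivable_pt_lim_const | apply derivable_pt_lim_id].
  - intros z hz. simpl. replace (T z0 + (T z - T z0)) with (T z) by ring. exact (hgT z hz).
Qed.

(** * The model in factored form *)

(* [A / B] is the endemic equilibrium.  The factored form is only assumed off the
   pole [z = - gv / bv], where [F] takes the junk value [- gh z] since [x / 0 = 0]. *)
Section Model.

Variables (A B bv gv : R) (f : R -> R).
Hypotheses (hbv : 0 < bv) (hgv : 0 < gv) (hB : 0 < B) (hAB : A < B).
Hypothesis hf : forall z, bv * z + gv <> 0 -> f z = z * (A - B * z) / (bv * z + gv).

Lemma f_neg_of_gt1 z : 1 < z -> f z < 0.
Proof.
  intro hz. rewrite hf by nra. apply Rdiv_neg_pos; [| nra].
  assert (A - B * z < 0) by nra. nra.
Qed.

Lemma f_ge_linear z : 0 <= z <= 1 -> - ((B - A) / gv) * z <= f z.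
Proof.
  intro hz. rewrite hf by nra. apply (Rle_div_r _ _ (bv * z + gv)); [nra|].
  set (L := (B - A) / gv).
  assert (hL : L * gv = B - A) by (unfold L; field; lra).
  assert (0 <= L) by (apply Rlt_le, Rdiv_lt_0_compat; lra).
  assert (0 <= L * bv * z) by (apply Rmult_le_pos; [apply Rmult_le_pos |]; lra).
  assert (0 <= z * (B * (1 - z) + L * bv * z)) by (apply Rmult_le_pos; nra).
  replace (- L * z * (bv * z + gv)) with (- (L * bv) * z * z - (L * gv) * z) by ring.
  rewrite hL. nra.
Qed.

Lemma f_ge_linear_near0 z : - (gv / (2 * bv)) < z < 0 ->
  (2 * Rabs A / gv + B / bv) * z <= f z.
Proof.
  intro hz.
  assert (hD : gv / 2 < bv * z + gv).
  { assert (bv * (gv / (2 * bv)) = gv / 2) by (field; lra). nra. }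
  rewrite hf by lra. apply (Rle_div_r _ _ (bv * z + gv)); [lra|].
  set (L := 2 * Rabs A / gv + B / bv).
  assert (hLD : L * (gv / 2) = Rabs A + B * (gv / (2 * bv))) by (unfold L; field; lra).
  assert (hL : 0 <= L).
  { pose proof (Rabs_pos A).
    assert (0 <= 2 * Rabs A / gv)
      by (apply Rmult_le_pos; [lra | apply Rlt_le, Rinv_0_lt_compat; lra]).
    assert (0 < B / bv) by (apply Rdiv_lt_0_compat; lra).
    unfold L. lra. }
  pose proof (Rle_abs A).
  assert (A - B * z <= L * (bv * z + gv)) by nra.
  nra.
Qed.

Lemma f_le_quadratic z : A <= 0 -> 0 <= z <= 1 -> f z <= - (B / (bv + gv)) * (z * z).
Proof.
  intros hA hz. rewrite hf by nra. apply (Rle_div_l _ _ (bv * z + gv)); [nra|].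
  set (c := B / (bv + gv)).
  assert (hc : c * (bv + gv) = B) by (unfold c; field; lra).
  assert (0 <= c * (z * z)) by (apply Rmult_le_pos; [apply Rlt_le, Rdiv_lt_0_compat | nra]; lra).
  assert (hmono : c * (z * z) * (bv * z + gv) <= c * (z * z) * (bv + gv))
    by (apply Rmult_le_compat_l; nra).
  replace (c * (z * z) * (bv + gv)) with (c * (bv + gv) * (z * z)) in hmono by ring.
  rewrite hc in hmono. nra.
Qed.

Lemma f_le_linear z : A <= 0 -> 0 <= z <= 1 -> f z <= A / (bv + gv) * z.
Proof.
  intros hA hz. rewrite hf by nra. apply (Rle_div_l _ _ (bv * z + gv)); [nra|].
  set (k := A / (bv + gv)).
  assert (hk : k * (bv + gv) = A) by (unfold k; field; lra).
  assert (k <= 0) by (apply (Rle_div_l _ _ (bv + gv)); lra).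
  assert (hmono : k * z * (bv + gv) <= k * z * (bv * z + gv))
    by (apply Rmult_le_compat_neg_l; nra).
  replace (k * z * (bv + gv)) with (k * (bv + gv) * z) in hmono by ring.
  rewrite hk in hmono. nra.
Qed.

Lemma f_endemic_form z : 0 <= z -> f z = - (B * z / (bv * z + gv)) * (z - A / B).
Proof. intro hz. rewrite hf by nra. field. split; nra. Qed.

Lemma f_endemic_contraction c z : 0 < c <= z -> z <= 1 ->
  (z - A / B) * f z <= - (B * c / (bv + gv)) * ((z - A / B) * (z - A / B)).
Proof.
  intros hcz hz1. rewrite f_endemic_form by lra.
  assert (hk : B * c / (bv + gv) <= B * z / (bv * z + gv)).
  { unfold Rdiv. apply Rmult_le_compat.
    - nra.
    - apply Rlt_le, Rinv_0_lt_compat. lra.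
    - apply Rmult_le_compat_l; lra.
    - apply Rinv_le_contravar; nra. }
  assert (0 <= (z - A / B) * (z - A / B)) by apply Rle_0_sqr.
  nra.
Qed.

Lemma sol_unit_interval y : is_sol f y -> closed01 (y 0) ->
  forall t, 0 <= t -> closed01 (y t).
Proof.
  intros hs [h0 h1] t ht. split.
  - apply (sol_nonneg f y (gv / (2 * bv)) (2 * Rabs A / gv + B / bv) hs); try assumption.
    + apply Rdiv_lt_0_compat; lra.
    + intros z hz. apply f_ge_linear_near0. lra.
  - apply (sol_le_of_rhs_nonpos f y 1 hs h1); [| exact ht].
    intros u _ hu. apply Rlt_le, f_neg_of_gt1, hu.
Qed.

Lemma sol_pos y : is_sol f y -> half_open01 (y 0) -> forall t, 0 <= t -> 0 < y t.
Proof.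
  intros hs h0 t ht.
  set (L := (B - A) / gv).
  assert (H : y 0 * exp (L * 0) <= y t * exp (L * t)).
  { apply (sol_exp_weighted_ge f); [exact hs | lra |].
    intros u hu. pose proof (f_ge_linear (y u)
      (sol_unit_interval y hs ltac:(unfold closed01, half_open01 in *; lra) u ltac:(lra))).
    unfold L. lra. }
  rewrite Rmult_0_r, exp_0, Rmult_1_r in H. pose proof (exp_pos (L * t)).
  destruct h0. nra.
Qed.

Lemma zero_inv_time_decay y : A <= 0 -> is_sol f y -> closed01 (y 0) ->
  forall t, 0 <= t -> B / (bv + gv) * t * y t <= 1.
Proof.
  intros hA hs hy0 t ht.
  pose proof (sol_unit_interval y hs hy0) as hI.
  assert (hrhs : forall u, 0 < u -> f (y u) <= - (B / (bv + gv)) * (y u * y u))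
    by (intros u hu; exact (f_le_quadratic (y u) hA (hI u ltac:(lra)))).
  assert (hc : 0 < B / (bv + gv)) by (apply Rdiv_lt_0_compat; lra).
  destruct (Req_dec (y 0) 0) as [h0 | h0].
  - assert (hyt : y t <= 0).
    { apply (sol_le_of_rhs_nonpos f y 0 hs ltac:(lra)); [| exact ht].
      intros u hu hpos. specialize (hrhs u hu).
      assert (0 <= B / (bv + gv) * (y u * y u)) by (apply Rmult_le_pos; nra). lra. }
    assert (0 <= B / (bv + gv) * t) by (apply Rmult_le_pos; lra).
    destruct (hI t ht). nra.
  - apply Rlt_le, (sol_inv_time_decay f y _ hs); [| exact hrhs | exact ht].
    apply (sol_pos y hs). destruct hy0. split; lra.
Qed.

Lemma zero_glob_asym_stable : A <= 0 -> glob_asym_stable f closed01 0.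
Proof.
  intros hA y hs hy0 eps he.
  set (c := B / (bv + gv)).
  assert (hc : 0 < c) by (apply Rdiv_lt_0_compat; lra).
  exists (2 / (c * eps)). intros t ht.
  assert (hT : 0 < 2 / (c * eps)) by (apply Rdiv_lt_0_compat; nra).
  pose proof (zero_inv_time_decay y hA hs hy0 t ltac:(lra)) as hdecay. fold c in hdecay.
  destruct (sol_unit_interval y hs hy0 t ltac:(lra)) as [hyt _].
  rewrite Rminus_0_r, Rabs_right by lra.
  assert (hct : 2 / eps <= c * t).
  { replace (2 / eps) with (c * (2 / (c * eps))) by (field; lra).
    apply Rmult_le_compat_l; lra. }
  apply (Rle_div_l _ _ eps he) in hct.
  nra.
Qed.

Lemma zero_glob_exp_stable : A < 0 -> glob_exp_stable f closed01 0.
Proof.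
  intro hA. split; [apply zero_glob_asym_stable; lra|].
  set (k := - A / (bv + gv)).
  exists 1, k. split; [lra|]. split; [apply Rdiv_lt_0_compat; lra|].
  intros y hs hy0 t ht.
  pose proof (sol_unit_interval y hs hy0) as hI.
  assert (H : y t * exp (k * t) <= y 0 * exp (k * 0)).
  { apply (sol_exp_weighted_le f); [exact hs | lra |].
    intros u hu. pose proof (f_le_linear (y u) ltac:(lra) (hI u ltac:(lra))).
    replace (A / (bv + gv)) with (- k) in H by (unfold k; field; lra). lra. }
  rewrite Rmult_0_r, exp_0, Rmult_1_r in H.
  destruct (hI t ht) as [hyt _]. destruct hy0 as [_ hy0].
  rewrite Rminus_0_r, Rabs_right, Rmult_1_l by lra.
  replace (- k * t) with (- (k * t)) by ring. rewrite exp_Ropp.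
  pose proof (exp_pos (k * t)).
  apply (Rmult_le_reg_r (exp (k * t))); [lra|]. rewrite Rinv_l by lra. lra.
Qed.

Lemma endemic_lower_bound y : 0 < A -> is_sol f y -> half_open01 (y 0) ->
  forall t, 0 <= t -> Rmin (y 0) (A / B) <= y t.
Proof.
  intros hA hs hy0.
  apply (sol_ge_of_rhs_nonneg f y _ hs (Rmin_l _ _)).
  intros t ht hlt. pose proof (Rmin_r (y 0) (A / B)). pose proof (sol_pos y hs hy0 t ltac:(lra)).
  rewrite f_endemic_form by lra.
  assert (0 < B * y t / (bv * y t + gv)) by (apply Rdiv_lt_0_compat; nra).
  nra.
Qed.

Lemma endemic_sq_dist_decay y : 0 < A -> is_sol f y -> half_open01 (y 0) ->
  exists k, 0 < k /\ forall t, 0 <= t ->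
    (y t - A / B) * (y t - A / B) * exp (2 * k * t) <= 1.
Proof.
  intros hA hs hy0.
  set (ee := A / B).
  assert (hee : 0 < ee < 1).
  { unfold ee. split; [apply Rdiv_lt_0_compat; lra|]. apply (Rlt_div_l _ _ B); lra. }
  pose proof (sol_unit_interval y hs ltac:(unfold closed01, half_open01 in *; lra)) as hI.
  set (c := Rmin (y 0) ee).
  assert (hc : 0 < c) by (apply Rmin_glb_lt; [destruct hy0 | ]; lra).
  pose proof (endemic_lower_bound y hA hs hy0) as hlow. fold ee c in hlow.
  set (k := B * c / (bv + gv)).
  assert (hk : 0 < k) by (apply Rdiv_lt_0_compat; nra).
  exists k. split; [exact hk|]. intros t ht.
  assert (H : (y t - ee) * (y t - ee) * exp (2 * k * t) + 0 * t
              <= (y 0 - ee) * (y 0 - ee) * exp (2 * k * 0) + 0 * 0).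
  { apply (sol_lyapunov_nonincreasing f y (fun z => (z - ee) * (z - ee))
             (fun z => 2 * (z - ee))); [exact hs | lra | |].
    - intros u hu.
      assert (hlin : derivable_pt_lim (fun z => z - ee) (y u) 1).
      { apply (derivable_pt_lim_eq_deriv _ _ (1 - 0)); [| ring].
        apply (derivable_pt_lim_minus id (fct_cte ee));
          [apply derivable_pt_lim_id | apply derivable_pt_lim_const]. }
      apply (derivable_pt_lim_eq_deriv _ _ (1 * (y u - ee) + (y u - ee) * 1)); [| ring].
      exact (derivable_pt_lim_mult _ _ _ _ _ hlin hlin).
    - intros u hu. pose proof (exp_pos (2 * k * u)).
      pose proof (f_endemic_contraction c (y u) (conj hc (hlow u ltac:(lra)))
                    (proj2 (hI u ltac:(lra)))) as hcontr.
      fold ee k in hcontr. nra. }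
  rewrite !Rmult_0_l, Rmult_0_r, exp_0, !Rplus_0_r, Rmult_1_r in H.
  destruct hy0. nra.
Qed.

Lemma endemic_glob_asym_stable : 0 < A -> glob_asym_stable f half_open01 (A / B).
Proof.
  intros hA y hs hy0.
  destruct (endemic_sq_dist_decay y hA hs hy0) as [k [hk hdecay]].
  apply (conv_to_of_abs_le_exp y _ k hk). intros t ht.
  specialize (hdecay t ht). pose proof (exp_pos (2 * k * t)).
  rewrite <- (Rabs_right (exp (- k * t))) by (left; apply exp_pos).
  apply Rsqr_le_abs_0. unfold Rsqr.
  replace (exp (- k * t) * exp (- k * t)) with (1 / exp (2 * k * t)).
  - apply (Rle_div_r _ _ (exp (2 * k * t))); lra.
  - rewrite <- exp_plus. replace (- k * t + - k * t) with (- (2 * k * t)) by ring.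
    rewrite exp_Ropp. field. lra.
Qed.

Lemma endemic_loc_asym_stable : 0 < A -> loc_asym_stable f closed01 (A / B).
Proof.
  intro hA. assert (hee : 0 < A / B) by (apply Rdiv_lt_0_compat; lra).
  exists (A / B / 2). split; [lra|]. intros y hs [_ hy1] hd.
  apply (endemic_glob_asym_stable hA y hs). split; [| exact hy1].
  pose proof (Rle_abs (- (y 0 - A / B))) as habs. rewrite Rabs_Ropp in habs. lra.
Qed.

(* A primitive of [1 / f = (bv z + gv) / (z (A - B z))] on [(0, A / B)]. *)
Definition time_map z := gv / A * ln z - (bv + gv * B / A) / B * ln (A - B * z).

Lemma time_map_coeffs_pos : 0 < A -> 0 < gv / A /\ 0 < (bv + gv * B / A) / B.
Proof.
  intro hA. split; [apply Rdiv_lt_0_compat; lra|].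
  assert (0 < gv * B / A) by (apply Rdiv_lt_0_compat; nra).
  apply Rdiv_lt_0_compat; lra.
Qed.

Lemma time_map_derivable z : 0 < A -> 0 < z < A / B -> derivable_pt_lim time_map z (/ f z).
Proof.
  intros hA hz.
  pose proof (proj2 (Rlt_div_r z A B hB) (proj2 hz)) as hw.
  set (r := (bv + gv * B / A) / B).
  assert (hlin : derivable_pt_lim (fun u => A - B * u) z (0 - B * 1)).
  { apply (derivable_pt_lim_minus (fct_cte A) (mult_real_fct B id));
      [apply derivable_pt_lim_const | apply derivable_pt_lim_scal, derivable_pt_lim_id]. }
  apply (derivable_pt_lim_eq_deriv _ _ (gv / A * / z - r * (/ (A - B * z) * (0 - B * 1)))).
  - apply (derivable_pt_lim_minus (mult_real_fct (gv / A) ln)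
             (mult_real_fct r (comp ln (fun u => A - B * u))));
      apply derivable_pt_lim_scal.
    + apply derivable_pt_lim_ln. lra.
    + apply (derivable_pt_lim_comp (fun u => A - B * u) ln); [exact hlin |].
      apply derivable_pt_lim_ln. lra.
  - assert (0 < bv * z) by (apply Rmult_lt_0_compat; lra).
    rewrite hf by (apply Rgt_not_eq; lra). unfold r. field. repeat split; lra.
Qed.

Lemma time_map_unbounded_below x : 0 < A -> exists z, 0 < z <= A / B / 2 /\ time_map z <= x.
Proof.
  intro hA. unfold time_map. destruct (time_map_coeffs_pos hA) as [hp hr].
  set (p := gv / A) in *. set (r := (bv + gv * B / A) / B) in *.
  set (z := Rmin (A / B / 2) (exp ((x + r * ln (A / 2)) / p))).
  assert (hz : 0 < z <= A / B / 2).
  { assert (0 < A / B / 2) by (apply Rdiv_lt_0_compat; [apply Rdiv_lt_0_compat |]; lra).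
    split; [apply Rmin_glb_lt; [| apply exp_pos] | apply Rmin_l]; lra. }
  exists z. split; [exact hz|].
  assert (hlnz : ln z * p <= x + r * ln (A / 2)).
  { apply (Rle_div_r _ _ p hp). rewrite <- (ln_exp ((x + r * ln (A / 2)) / p)).
    apply ln_le; [lra | apply Rmin_r]. }
  assert (hw : A / 2 <= A - B * z).
  { assert (hBz : B * z <= B * (A / B / 2)) by (apply Rmult_le_compat_l; lra).
    replace (B * (A / B / 2)) with (A / 2) in hBz by (field; lra). lra. }
  assert (r * ln (A / 2) <= r * ln (A - B * z))
    by (apply Rmult_le_compat_l; [lra | apply ln_le; lra]).
  lra.
Qed.

Lemma time_map_unbounded_above x : 0 < A -> exists z, A / B / 2 <= z < A / B /\ x <= time_map z.
Proof.
  intro hA. unfold time_map. destruct (time_map_coeffs_pos hA) as [hp hr].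
  set (p := gv / A) in *. set (r := (bv + gv * B / A) / B) in *.
  assert (hee : 0 < A / B / 2) by (apply Rdiv_lt_0_compat; [apply Rdiv_lt_0_compat |]; lra).
  set (w := Rmin (A / 2) (exp ((p * ln (A / B / 2) - x) / r))).
  assert (hw : 0 < w <= A / 2).
  { split; [apply Rmin_glb_lt; [| apply exp_pos] | apply Rmin_l]; lra. }
  set (z := (A - w) / B).
  assert (hAz : A - B * z = w) by (unfold z; field; lra).
  assert (hwB : 0 < w / B <= A / B / 2).
  { split; [apply Rdiv_lt_0_compat; lra |].
    replace (A / B / 2) with (A / 2 * / B) by (field; lra).
    apply Rmult_le_compat_r; [apply Rlt_le, Rinv_0_lt_compat |]; lra. }
  assert (hz : z = A / B - w / B) by (unfold z; field; lra).
  exists z. split; [lra|]. rewrite hAz.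
  assert (hlnw : ln w * r <= p * ln (A / B / 2) - x).
  { apply (Rle_div_r _ _ r hr). rewrite <- (ln_exp ((p * ln (A / B / 2) - x) / r)).
    apply ln_le; [lra | apply Rmin_r]. }
  assert (p * ln (A / B / 2) <= p * ln z)
    by (apply Rmult_le_compat_l; [lra | apply ln_le; lra]).
  lra.
Qed.

Lemma time_map_surjective x : 0 < A -> exists z, 0 < z < A / B /\ time_map z = x.
Proof.
  intro hA.
  destruct (time_map_unbounded_below (x - 1) hA) as [z1 [hz1 hT1]].
  destruct (time_map_unbounded_above (x + 1) hA) as [z2 [hz2 hT2]].
  assert (h12 : z1 < z2) by (destruct (Req_dec z1 z2) as [<- | hne]; lra).
  destruct (IVT_interv (fun z => time_map z - x) z1 z2) as [z [hz e]];
    [| exact h12 | lra | lra |].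
  - intros a ha. apply continuity_pt_minus; [| apply continuity_pt_const; intros u v; reflexivity].
    exact (derivable_pt_lim_continuity_pt _ _ _ (time_map_derivable a hA ltac:(lra))).
  - exists z. split; lra.
Qed.

Lemma zero_unstable : 0 < A -> unstable f closed01 0.
Proof.
  intros hA hstab. set (ee := A / B).
  assert (hee : 0 < ee < 1).
  { unfold ee. split; [apply Rdiv_lt_0_compat; lra|]. apply (Rlt_div_l _ _ B); lra. }
  assert (hT : forall z, 0 < z < ee -> 0 < f z /\ derivable_pt_lim time_map z (/ f z)).
  { intros z hz. split; [| exact (time_map_derivable z hA hz)].
    rewrite f_endemic_form by lra. fold ee.
    assert (0 < B * z / (bv * z + gv)) by (apply Rdiv_lt_0_compat; nra). nra. }
  assert (hTinc : forall z1 z2, 0 < z1 -> z1 < z2 -> z2 < ee -> time_map z1 < time_map z2).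
  { apply (strictly_increasing_of_derive_pos _ (fun z => / f z)).
    intros z hz. destruct (hT z hz). split; [assumption | now apply Rinv_0_lt_compat]. }
  destruct (hstab (ee / 2) ltac:(lra)) as [d [hd hclose]].
  set (z0 := Rmin (d / 2) (ee / 4)).
  assert (hz0 : 0 < z0 < d /\ z0 <= ee / 4).
  { unfold z0. pose proof (Rmin_l (d / 2) (ee / 4)). pose proof (Rmin_r (d / 2) (ee / 4)).
    assert (0 < Rmin (d / 2) (ee / 4)) by (apply Rmin_glb_lt; lra). lra. }
  destruct (sol_of_time_map f time_map 0 ee z0 hT
              (fun x => time_map_surjective x hA) ltac:(lra)) as [y [hs hy]].
  assert (hy0 : y 0 = z0) by (rewrite <- (hy z0 ltac:(lra)), Rminus_diag; reflexivity).
  set (t1 := time_map (ee / 2) - time_map z0).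
  assert (ht1 : 0 < t1).
  { pose proof (hTinc z0 (ee / 2) ltac:(lra) ltac:(lra) ltac:(lra)). unfold t1. lra. }
  specialize (hclose y hs ltac:(unfold closed01; lra)
                ltac:(rewrite hy0, Rminus_0_r, Rabs_right; lra) t1 ht1).
  unfold t1 in hclose. rewrite (hy (ee / 2)) in hclose by lra.
  rewrite Rminus_0_r, Rabs_right in hclose; lra.
Qed.

End Model.

(** * Back to the original parameters *)

Lemma F_factor C0 bh gh bv gv z : bv * z + gv <> 0 ->
  F C0 bh gh bv gv z =
  z * ((C0 * bh * bv - gh * gv) - (C0 * bh * bv + gh * bv) * z) / (bv * z + gv).
Proof. intro hz. unfold F. field. exact hz. Qed.

Lemma Ee_eq C0 bh gh bv gv :
  Ee C0 bh gh bv gv = (C0 * bh * bv - gh * gv) / (C0 * bh * bv + gh * bv).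
Proof. unfold Ee. now rewrite (Rmult_comm bv gh). Qed.

Lemma F_zero_iff C0 bh gh bv gv z :
  0 < C0 -> 0 < bh -> 0 < gh -> 0 < bv -> 0 < gv ->
  F C0 bh gh bv gv z = 0 <-> z = 0 \/ z = Ee C0 bh gh bv gv.
Proof.
  intros hC0 hbh hgh hbv hgv.
  assert (ha : 0 < C0 * bh * bv) by (apply Rmult_lt_0_compat; [apply Rmult_lt_0_compat |]; lra).
  set (A := C0 * bh * bv - gh * gv). set (B := C0 * bh * bv + gh * bv).
  assert (hB : 0 < B) by (unfold B; nra).
  assert (hEe : bv * (A / B) + gv <> 0).
  { apply Rgt_not_eq. replace (bv * (A / B) + gv) with (C0 * bh * bv * (bv + gv) / B)
      by (unfold A, B; field; apply Rgt_not_eq, hB).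
    apply Rdiv_lt_0_compat; nra. }
  rewrite Ee_eq. fold A B. split.
  - intro hz. destruct (Req_dec (bv * z + gv) 0) as [hD | hD].
    + left. unfold F, Rdiv in hz. rewrite hD, Rinv_0 in hz. nra.
    + rewrite F_factor in hz by exact hD. fold A B in hz.
      apply (Rmult_eq_compat_r (bv * z + gv)) in hz.
      replace (z * (A - B * z) / (bv * z + gv) * (bv * z + gv)) with (z * (A - B * z))
        in hz by (field; exact hD).
      rewrite Rmult_0_l in hz. destruct (Rmult_integral _ _ hz) as [h | h]; [now left | right].
      field_simplify_eq; lra.
  - intros [-> | ->].
    + unfold F, Rdiv. ring.
    + rewrite F_factor by exact hEe. fold A B.
      replace (A - B * (A / B)) with 0 by (field; lra). unfold Rdiv. ring.
Qed.

Lemma Rnum0_eq C0 bh gh bv gv : 0 < gh -> 0 < gv ->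
  Rnum0 C0 bh gh bv gv = sqrt (C0 * bh * bv / (gv * gh)).
Proof. intros hgh hgv. unfold Rnum0. f_equal. field. lra. Qed.

Lemma Rnum0_le_1_iff C0 bh gh bv gv : 0 < C0 -> 0 < bh -> 0 < gh -> 0 < bv -> 0 < gv ->
  Rnum0 C0 bh gh bv gv <= 1 <-> C0 * bh * bv - gh * gv <= 0.
Proof.
  intros hC0 hbh hgh hbv hgv. rewrite Rnum0_eq, <- sqrt_1 by lra.
  assert (hg : 0 < gv * gh) by nra.
  assert (0 < C0 * bh * bv / (gv * gh))
    by (apply Rdiv_lt_0_compat; [apply Rmult_lt_0_compat; [apply Rmult_lt_0_compat |] |]; lra).
  split.
  - intro h. apply sqrt_le_0, (Rle_div_l _ _ _ hg) in h; lra.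
  - intro h. apply sqrt_le_1_alt, (Rle_div_l _ _ _ hg). lra.
Qed.

Lemma Rnum0_lt_1_iff C0 bh gh bv gv : 0 < C0 -> 0 < bh -> 0 < gh -> 0 < bv -> 0 < gv ->
  Rnum0 C0 bh gh bv gv < 1 <-> C0 * bh * bv - gh * gv < 0.
Proof.
  intros hC0 hbh hgh hbv hgv. rewrite Rnum0_eq, <- sqrt_1 by lra.
  assert (hg : 0 < gv * gh) by nra.
  assert (0 < C0 * bh * bv / (gv * gh))
    by (apply Rdiv_lt_0_compat; [apply Rmult_lt_0_compat; [apply Rmult_lt_0_compat |] |]; lra).
  split.
  - intro h. apply sqrt_lt_0_alt, (Rlt_div_l _ _ _ hg) in h. lra.
  - intro h. apply sqrt_lt_1_alt. split; [lra|]. apply (Rlt_div_l _ _ _ hg). lra.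
Qed.

Theorem theorem4 (C0 bh gh bv gv : R)
  (hC0 : 0 < C0) (hbh : 0 < bh) (hgh : 0 < gh) (hbv : 0 < bv) (hgv : 0 < gv) :
  let f := F C0 bh gh bv gv in
  let r0 := Rnum0 C0 bh gh bv gv in
  let ee := Ee C0 bh gh bv gv in
  (* the two equilibrium points *)
  (f 0 = 0 /\ f ee = 0 /\ (forall y, f y = 0 -> y = 0 \/ y = ee)) /\
  (* (i) *)
  (r0 <= 1 -> glob_asym_stable f closed01 0) /\
  (r0 < 1 -> glob_exp_stable f closed01 0) /\
  (1 < r0 -> unstable f closed01 0) /\
  (* (ii) *)
  (1 < r0 -> loc_asym_stable f closed01 ee /\ glob_asym_stable f half_open01 ee).
Proof.
  intros f r0 ee.
  assert (ha : 0 < C0 * bh * bv) by (apply Rmult_lt_0_compat; [apply Rmult_lt_0_compat |]; lra).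
  set (A := C0 * bh * bv - gh * gv). set (B := C0 * bh * bv + gh * bv).
  assert (hB : 0 < B) by (unfold B; nra).
  assert (hAB : A < B) by (unfold A, B; nra).
  assert (hf : forall z, bv * z + gv <> 0 -> f z = z * (A - B * z) / (bv * z + gv))
    by (intros; now apply F_factor).
  assert (hzero : forall z, f z = 0 <-> z = 0 \/ z = ee) by (intro; now apply F_zero_iff).
  assert (hle : r0 <= 1 <-> A <= 0) by now apply Rnum0_le_1_iff.
  assert (hlt : r0 < 1 <-> A < 0) by now apply Rnum0_lt_1_iff.
  assert (hgt : 1 < r0 -> 0 < A) by (intros h; apply Rnot_le_lt; intro hA; apply hle in hA; lra).
  assert (hee : ee = A / B) by apply Ee_eq.
  split; [| split; [| split; [| split]]].
  - split; [| split]; [apply hzero; auto .. | intros z hz; now apply hzero].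
  - intro h. apply (zero_glob_asym_stable A B bv gv); auto. now apply hle.
  - intro h. apply (zero_glob_exp_stable A B bv gv); auto. now apply hlt.
  - intro h. apply (zero_unstable A B bv gv); auto.
  - intro h. rewrite hee.
    split; [apply (endemic_loc_asym_stable A B bv gv) | apply (endemic_glob_asym_stable A B bv gv)];
      auto.
Qed.
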